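(* For each $n=1,2,\dots$ there is a function $f:\{-1,1\}^n\to \mathbb{R}$ with \[ \|f\|_2=1\le \|f\|_\infty\le\sqrt2,\qquad I(f)<1, \qquad \text{and}\qquad H(\hat f^2)>\frac{n}{n+1}\log n. \]
   Context: Equip $\{-1,1\}^n$ with the uniform (normalized counting) probability measure. For $g:\{-1,1\}^n\to\mathbb{C}$, $\|g\|_2^2=2^{-n}\sum_{\delta\in\{-1,1\}^n}|g(\delta)|^2$ and $\|g\|_\infty=\max_{\delta}|g(\delta)|$. Let $\varepsilon_i:\{-1,1\}^n\to\{-1,1\}$ be the $i$-th coordinate projection, and for $A\subseteq[n]=\{1,\dots,n\}$ let $W_A=\prod_{i\in A}\varepsilon_i$. The Fourier–Walsh coefficients are $\hat g(A)=2^{-n}\sum_{\delta\in\{-1,1\}^n} g(\delta)W_A(\delta)$, so $g=\sum_{A\subseteq[n]}\hat g(A)W_A$. The influence is $I(g)=\sum_{A\subseteq[n]}|\hat g(A)|^2|A|$, and the Fourier entropy is $H(|\hat g|^2)=-\sum_{A\subseteq[n]}|\hat g(A)|^2\log|\hat g(A)|^2$ with $0\log 0=0$ (for real $g$ this is written $H(\hat g^2)$). Logarithms are to base $2$. *)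

From HB Require Import structures.
From mathcomp Require Import all_boot all_order all_algebra.
From mathcomp Require Import all_classical all_reals all_analysis.
Set Implicit Arguments. Unset Strict Implicit. Unset Printing Implicit Defensive.
Import Order.TTheory GRing.Theory Num.Theory.
Local Open Scope ring_scope.

Section Cube.
Variable R : realType.
Variable n : nat.

(* A point delta of {-1,1}^n is encoded as d : {ffun 'I_n -> bool};
   coordinate i equals -1 if d i = true and 1 if d i = false. *)
Definition cube := {ffun 'I_n -> bool}.

Definition eps (i : 'I_n) (d : cube) : R := if d i then -1 else 1.

Definition walsh (A : {set 'I_n}) (d : cube) : R := \prod_(i in A) eps i d.

Definition expect (g : cube -> R) : R := (2 ^+ n)^-1 * \sum_(d : cube) g d.

Definition norm2 (g : cube -> R) : R := Num.sqrt (expect (fun d => g d ^+ 2)).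

Definition norminf (g : cube -> R) : R := \big[Num.max/0]_(d : cube) `|g d|.

Definition fourier (g : cube -> R) (A : {set 'I_n}) : R :=
  expect (fun d => g d * walsh A d).

Definition influence (g : cube -> R) : R :=
  \sum_(A : {set 'I_n}) fourier g A ^+ 2 * (#|A|%:R).

Definition log2 (x : R) : R := ln x / ln 2.

Definition xlogx (x : R) : R := if x == 0 then 0 else x * log2 x.

Definition fourier_entropy (g : cube -> R) : R :=
  - \sum_(A : {set 'I_n}) xlogx (fourier g A ^+ 2).

End Cube.

From HB Require Import structures.
From mathcomp Require Import all_boot all_order all_algebra.
From mathcomp Require Import all_classical all_reals all_analysis.
From mathcomp Require Import complex ring lra.
Import Order.TTheory GRing.Theory Num.Theory.
Local Open Scope ring_scope.
Set Implicit Arguments. Unset Strict Implicit. Unset Printing Implicit Defensive.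

(* Pick p = 1/(n+1), s = sqrt p, c = sqrt (1 - p) and
     f(x) = Re ((1 + i) * prod_k (i s x_k + c)).
   Expanding the product, the Walsh coefficient of f on A is
   Re ((1 + i) i^|A|) s^|A| c^(n-|A|) = +- s^|A| c^(n-|A|), so the Fourier
   spectrum hat f^2 is the p-biased product measure on subsets of [n].  Hence
   ||f||_2 = 1 (Parseval), I(f) = n p = n/(n+1) < 1, and H(hat f^2) = n h(p),
   which exceeds (n/(n+1)) log n by n log (1 + 1/n).  Each factor of the product
   has modulus 1, so |f| <= |1 + i| = sqrt 2, while ||f||_oo >= ||f||_2 = 1. *)

Section WalshOrthonormality.
Variables (R : realType) (n : nat).

Definition flip (i : 'I_n) (d : cube n) : cube n :=
  [ffun j => if j == i then ~~ d j else d j].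

Lemma flipK i : involutive (flip i).
Proof.
by move=> d; apply/ffunP => j; rewrite !ffunE; case: (j == i); rewrite ?negbK.
Qed.

Lemma eps_flip i j d :
  eps R j (flip i d) = (if j == i then -1 else 1) * eps R j d.
Proof.
by rewrite /eps ffunE; case: (j == i); case: (d j); rewrite /= ?mulN1r ?opprK ?mul1r.
Qed.

Lemma walsh_flip (A : {set 'I_n}) i d :
  walsh R A (flip i d) = (if i \in A then -1 else 1) * walsh R A d.
Proof.
rewrite /walsh; under eq_bigr do rewrite eps_flip; rewrite big_split /=.
congr (_ * _); case: ifPn => [iA | iNA].
  by rewrite (bigD1 i) //= eqxx big1 ?mulr1 // => j /andP[_ /negbTE ->].
by apply: big1 => j jA; case: eqP => // ji; rewrite -ji jA in iNA.
Qed.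

Lemma eps_sqr (i : 'I_n) (d : cube n) : eps R i d ^+ 2 = 1.
Proof. by rewrite /eps; case: (d i); rewrite ?sqrrN expr1n. Qed.

Lemma walsh_sqr (A : {set 'I_n}) (d : cube n) : walsh R A d ^+ 2 = 1.
Proof.
by rewrite /walsh -prodrXl; apply: big1 => i _; rewrite eps_sqr.
Qed.

Lemma card_cube : #|{: cube n}| = (2 ^ n)%N.
Proof. by rewrite card_ffun card_bool card_ord. Qed.

Lemma expect_cst (x : R) : expect (fun _ : cube n => x) = x.
Proof.
by rewrite /expect sumr_const card_cube -[x *+ _]mulr_natr natrX mulrCA mulVf ?mulr1.
Qed.

Lemma ler_expect (g h : cube n -> R) :
  (forall d, g d <= h d) -> expect g <= expect h.
Proof.
by move=> gh; rewrite ler_wpM2l ?invr_ge0 ?exprn_ge0 // ler_sum.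
Qed.

Lemma expect_walsh_mul (A B : {set 'I_n}) :
  expect (fun d => walsh R A d * walsh R B d) = (A == B)%:R.
Proof.
have [<- | neqAB] := eqVneq A B.
  by rewrite -(expect_cst 1); congr expect; apply: funext => d; rewrite -expr2 walsh_sqr.
have [i iAB] : exists i, (i \in A) != (i \in B).
  apply/existsP; apply: contraR neqAB => /existsPn eqAB.
  by apply/eqP/setP => i; have /negPn/eqP := eqAB i.
(* flipping coordinate i is a bijection of the cube that negates the summand *)
have sum_opp : \sum_d walsh R A d * walsh R B d = - \sum_d walsh R A d * walsh R B d.
  rewrite {1}(reindex_inj (can_inj (flipK i))) -sumrN; apply: eq_bigr => d _.
  rewrite !walsh_flip; move: iAB.
  by case: (i \in A) (i \in B) => [] [] //= _; ring.
have sum0 : \sum_d walsh R A d * walsh R B d = 0 by lra.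
by rewrite /expect sum0 mulr0.
Qed.

End WalshOrthonormality.

Section WalshSeries.
Variables (R : realType) (n : nat).

Definition walsh_series (a : {set 'I_n} -> R) (d : cube n) : R :=
  \sum_A a A * walsh R A d.

Lemma expect_walsh_seriesMl a (g : cube n -> R) :
  expect (fun d => walsh_series a d * g d)
  = \sum_A a A * expect (fun d => walsh R A d * g d).
Proof.
rewrite /expect; under [RHS]eq_bigr do rewrite mulrCA; rewrite -mulr_sumr.
congr (_ * _); under eq_bigr do rewrite mulr_suml.
rewrite exchange_big /=; apply: eq_bigr => A _; rewrite mulr_sumr.
by apply: eq_bigr => d _; rewrite mulrA.
Qed.

Lemma fourier_walsh_series a B : fourier (walsh_series a) B = a B.
Proof.
rewrite /fourier expect_walsh_seriesMl.
under eq_bigr do rewrite expect_walsh_mul.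
rewrite (bigD1 B) //= eqxx mulr1 big1 ?addr0 // => A /negbTE ->.
by rewrite mulr0.
Qed.

Lemma expect_walsh_series_sqr a :
  expect (fun d => walsh_series a d ^+ 2) = \sum_A a A ^+ 2.
Proof.
under [X in expect X]funext => d do rewrite expr2.
rewrite expect_walsh_seriesMl; apply: eq_bigr => A _.
rewrite expr2 -{3}(fourier_walsh_series a A); congr (_ * _).
by congr expect; apply: funext => d; rewrite mulrC.
Qed.

End WalshSeries.

Section Norms.
Variables (R : realType) (n : nat) (g : cube n -> R).

Lemma ler_norminf d : `|g d| <= norminf g.
Proof. by rewrite /norminf (bigD1 d) //= le_max lexx. Qed.

Lemma norminf_le M : 0 <= M -> (forall d, `|g d| <= M) -> norminf g <= M.
Proof.
move=> M_ge0 gM; rewrite /norminf.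
by apply: (big_ind (fun x => x <= M)) => // x y xM yM; rewrite ge_max xM yM.
Qed.

Lemma norm2_le_norminf : norm2 g <= norminf g.
Proof.
have M_ge0 : 0 <= norminf g := le_trans (normr_ge0 _) (ler_norminf [ffun=> false]).
rewrite /norm2 -(ger0_norm M_ge0) -sqrtr_sqr ler_sqrt ?sqr_ge0 //.
rewrite -(@expect_cst R n (norminf g ^+ 2)); apply: ler_expect => d.
by rewrite -real_normK ?num_real // ler_pXn2r ?nnegrE ?normr_ge0 ?ler_norminf.
Qed.

End Norms.

Lemma ln_prod (R : realType) (I : Type) (r : seq I) (P : pred I) (F : I -> R) :
  (forall i, P i -> 0 < F i) ->
  ln (\prod_(i <- r | P i) F i) = \sum_(i <- r | P i) ln (F i).
Proof.
move=> F_gt0; suff : 0 < \prod_(i <- r | P i) F i /\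
    ln (\prod_(i <- r | P i) F i) = \sum_(i <- r | P i) ln (F i) by case.
apply: (big_ind2 (fun x y => 0 < x /\ ln x = y)); first by rewrite ln1.
  move=> x1 y1 x2 y2 [x1_gt0 <-] [x2_gt0 <-].
  by rewrite mulr_gt0 // lnM ?posrE.
by move=> i Pi; rewrite F_gt0.
Qed.

Definition binary_entropy (R : realType) (p : R) : R :=
  - (p * log2 p + (1 - p) * log2 (1 - p)).

Section BiasedWeight.
Variables (R : realType) (n : nat) (p : R).

Definition biased_weight (A : {set 'I_n}) : R :=
  \prod_i (if i \in A then p else 1 - p).

Lemma sum_biased_weight : \sum_A biased_weight A = 1.
Proof. by rewrite /biased_weight -bigA_distr big1 // => i _ /=; rewrite addrC subrK. Qed.

Lemma sum_biased_weight_mem i0 (x y : R) :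
  \sum_A biased_weight A * (if i0 \in A then x else y) = p * x + (1 - p) * y.
Proof.
pose F i := if i == i0 then p * x else p.
pose G i := if i == i0 then (1 - p) * y else 1 - p.
transitivity (\sum_(A : {set 'I_n}) \prod_i (if i \in A then F i else G i)).
  apply: eq_bigr => A _; rewrite /biased_weight (bigD1 i0) //= [RHS](bigD1 i0) //=.
  rewrite /F /G eqxx; under [in RHS]eq_bigr => i /negbTE i_neq do rewrite i_neq.
  by case: (i0 \in A); rewrite mulrAC.
rewrite -bigA_distr (bigD1 i0) //= big1 ?mulr1 /F /G ?eqxx // => i /negbTE ->.
by rewrite addrC subrK.
Qed.

Lemma sum_biased_weight_additive (x y : R) :
  \sum_A biased_weight A * \sum_i (if i \in A then x else y)
  = n%:R * (p * x + (1 - p) * y).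
Proof.
under eq_bigr do rewrite mulr_sumr; rewrite exchange_big /=.
under eq_bigr do rewrite sum_biased_weight_mem.
by rewrite sumr_const card_ord mulr_natl.
Qed.

Lemma sum_biased_weight_card :
  \sum_A biased_weight A * #|A|%:R = n%:R * p.
Proof.
have card_sum (A : {set 'I_n}) : #|A|%:R = \sum_i (if i \in A then 1 else 0 : R).
  by rewrite -big_mkcond sumr_const.
under eq_bigr do rewrite card_sum.
by rewrite sum_biased_weight_additive mulr1 mulr0 addr0.
Qed.

Hypotheses (p_gt0 : 0 < p) (p_lt1 : p < 1).

Lemma biased_weight_gt0 A : 0 < biased_weight A.
Proof. by apply: prodr_gt0 => i _; case: ifP; rewrite ?subr_gt0. Qed.

Lemma log2_biased_weight A :
  log2 (biased_weight A) = \sum_i (if i \in A then log2 p else log2 (1 - p)).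
Proof.
rewrite /log2 ln_prod => [|i _]; last by case: ifP; rewrite ?subr_gt0.
by rewrite mulr_suml; apply: eq_bigr => i _; case: ifP.
Qed.

Lemma entropy_biased_weight :
  - \sum_A xlogx (biased_weight A) = n%:R * binary_entropy p.
Proof.
under eq_bigr do rewrite /xlogx gt_eqF ?biased_weight_gt0 // log2_biased_weight.
by rewrite sum_biased_weight_additive mulrN.
Qed.

End BiasedWeight.

Section ComplexFacts.
Variable R : rcfType.
Local Open Scope complex_scope.

Lemma Re_mul_real (z : R[i]) (r : R) : complex.Re (z * r%:C) = complex.Re z * r.
Proof. by case: z => a b; rewrite /= mulr0 subr0. Qed.

Lemma Re_1i_expi_sqr k : complex.Re ((1 + 'i) * 'i ^+ k) ^+ 2 = 1 :> R.
Proof.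
suff : complex.Re ((1 + 'i) * 'i ^+ k) ^+ 2 = 1 :> R /\
       complex.Im ((1 + 'i) * 'i ^+ k) ^+ 2 = 1 :> R by case.
elim: k => [|k [Re2 Im2]]; first by rewrite expr0 mulr1 /= addr0 add0r expr1n.
by rewrite [_ ^+ k.+1]exprSr mulrA ReiNIm ImiRe sqrrN.
Qed.

End ComplexFacts.

Section TwistedProduct.
Variables (R : realType) (n : nat) (p : R).
Hypotheses (p_ge0 : 0 <= p) (p_le1 : p <= 1).
Local Open Scope complex_scope.

Let s := Num.sqrt p.
Let c := Num.sqrt (1 - p).

Definition twisted_coef (A : {set 'I_n}) : R :=
  complex.Re ((1 + 'i) * 'i ^+ #|A|) * \prod_i (if i \in A then s else c).

Definition twisted_product : cube n -> R := walsh_series twisted_coef.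

Lemma twisted_coef_sqr A : twisted_coef A ^+ 2 = biased_weight p A.
Proof.
rewrite exprMn Re_1i_expi_sqr mul1r -prodrXl; apply: eq_bigr => i _.
by case: ifP => _; rewrite sqr_sqrtr // subr_ge0.
Qed.

Lemma twisted_product_expand d :
  twisted_product d
  = complex.Re ((1 + 'i) * \prod_i ('i * (s * eps R i d)%:C + c%:C)).
Proof.
rewrite bigA_distr mulr_sumr raddf_sum; apply: eq_bigr => A _.
have -> : \prod_i (if i \in A then 'i * (s * eps R i d)%:C else c%:C)
          = 'i ^+ #|A| * (\prod_i (if i \in A then s else c) * walsh R A d)%:C.
  transitivity (\prod_i ((if i \in A then 'i else 1) *
      ((if i \in A then s else c) * (if i \in A then eps R i d else 1))%:C)).
    by apply: eq_bigr => i _; case: ifP; rewrite ?mul1r ?mulr1.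
  by rewrite big_split /= -rmorph_prod big_split /= -!big_mkcond prodr_const.
by rewrite mulrA /= Re_mul_real mulrA.
Qed.

Lemma norm_twisted_factor (e : R) : e ^+ 2 = 1 -> `|'i * (s * e)%:C + c%:C| = 1.
Proof.
move=> e2; rewrite normc_def /= !(mul0r, mul1r, oppr0, subr0, add0r, addr0).
by rewrite exprMn e2 mulr1 /s /c !sqr_sqrtr ?subr_ge0 // subrK sqrtr1.
Qed.

Lemma abs_twisted_product_le d : `|twisted_product d| <= Num.sqrt 2.
Proof.
rewrite twisted_product_expand -lecR; apply: le_trans (normc_ge_Re _) _.
rewrite normrM normr_prod big1 => [|i _]; last by rewrite norm_twisted_factor ?eps_sqr.
by rewrite mulr1 normc_def /= addr0 add0r expr1n lecR.
Qed.

Lemma fourier_twisted_product_sqr A :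
  fourier twisted_product A ^+ 2 = biased_weight p A.
Proof. by rewrite fourier_walsh_series twisted_coef_sqr. Qed.

Lemma norm2_twisted_product : norm2 twisted_product = 1.
Proof.
rewrite /norm2 expect_walsh_series_sqr.
by under eq_bigr do rewrite twisted_coef_sqr; rewrite sum_biased_weight sqrtr1.
Qed.

Lemma influence_twisted_product : influence twisted_product = n%:R * p.
Proof.
rewrite /influence; under eq_bigr do rewrite fourier_twisted_product_sqr.
exact: sum_biased_weight_card.
Qed.

End TwistedProduct.

Lemma fourier_entropy_twisted_product (R : realType) n (p : R) : 0 < p < 1 ->
  fourier_entropy (twisted_product (n := n) p) = n%:R * binary_entropy p.
Proof.
case/andP => p_gt0 p_lt1; rewrite /fourier_entropy.
under eq_bigr do rewrite fourier_twisted_product_sqr ?ltW //.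
exact: entropy_biased_weight.
Qed.

Lemma binary_entropy_inv_succ_gt (R : realType) (N : R) : 0 < N ->
  N / (N + 1) * log2 N < N * binary_entropy (N + 1)^-1.
Proof.
move=> N_gt0; have N1_gt0 : 0 < N + 1 by rewrite addr_gt0.
have ln2_gt0 : 0 < ln (2 : R) by rewrite ln_gt0 ?ltr1n.
have ln_lt : ln N < ln (N + 1) by rewrite ltr_ln ?posrE // ltrDl.
rewrite /binary_entropy (_ : 1 - (N + 1)^-1 = N / (N + 1)); last by field; rewrite gt_eqF.
rewrite /log2 lnV ?ln_div ?posrE // -subr_gt0.
have -> : N * - ((N + 1)^-1 * (- ln (N + 1) / ln 2)
                 + N / (N + 1) * ((ln N - ln (N + 1)) / ln 2))
          - N / (N + 1) * (ln N / ln 2) = N * (ln (N + 1) - ln N) / ln 2.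
  by field; rewrite ?gt_eqF.
by rewrite divr_gt0 // mulr_gt0 // subr_gt0.
Qed.

Unset Implicit Arguments.
Set Strict Implicit.

Theorem theorem1 (R : realType) (n : nat) (hn : (1 <= n)%N) :
  exists f : cube n -> R,
    [/\ norm2 f = 1,
        1 <= norminf f,
        norminf f <= Num.sqrt 2,
        influence f < 1
      & fourier_entropy f > n%:R / (n%:R + 1) * log2 (n%:R : R)].
Proof.
have n_gt0 : 0 < n%:R :> R by rewrite ltr0n.
have n1_gt1 : 1 < n%:R + 1 :> R by rewrite ltrDr.
pose p : R := (n%:R + 1)^-1.
have p_gt0 : 0 < p by rewrite invr_gt0 (lt_trans ltr01).
have p_lt1 : p < 1 by rewrite invf_lt1 // (lt_trans ltr01).
have norm2_f := norm2_twisted_product n (ltW p_gt0) (ltW p_lt1).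
exists (twisted_product p); split => //.
- by rewrite -norm2_f norm2_le_norminf.
- by apply: norminf_le => // d; rewrite abs_twisted_product_le ?ltW.
- by rewrite influence_twisted_product ?ltW // ltr_pdivrMr ?mul1r ?ltrDl // (lt_trans ltr01).
- by rewrite fourier_entropy_twisted_product ?p_gt0 ?binary_entropy_inv_succ_gt.
Qed.
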